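(* For a skew brace $A$, the spaces $\mathrm{Spec}\,A$ and $\mathrm{Spec}(A/\mathrm{Nil}\,A)$ (with their spectral topologies) are homeomorphic.
   Context: A (left) skew brace is a triple $(A,+,\circ)$ where $(A,+)$ and $(A,\circ)$ are groups such that $a\circ(b+c)=a\circ b-a+a\circ c$ for all $a,b,c$; common identity $e$. Put $\lambda_a(b)=-a+a\circ b$ and $a*b=-a+a\circ b-b$. An ideal is a normal subgroup $I$ of both $(A,+)$ and $(A,\circ)$ with $\lambda_a(I)\subseteq I$ for all $a$; for an ideal $I$, $A/I=\{a+I\}$ is a skew brace with $(a+I)+(b+I)=(a+b)+I$, $(a+I)\circ(b+I)=(a\circ b)+I$. A prime ideal is a proper ideal $P$ such that for any subsets $X,Y$ of $A$, $\{x*y\mid x\in X,y\in Y\}\subseteq P$ implies $X\subseteq P$ or $Y\subseteq P$; $\mathrm{Spec}\,A$ is the set of prime ideals, with the spectral topology whose closed sets are $H(I)=\{P\in\mathrm{Spec}\,A\mid I\subseteq P\}$, $I$ an ideal. $\mathrm{Nil}\,A$ is the intersection of all prime ideals of $A$. *)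

From Stdlib Require Import ClassicalEpsilon.
Set Implicit Arguments.

Record brace_ops := BraceOps {
  car :> Type;
  badd : car -> car -> car;
  bopp : car -> car;
  bzero : car;
  bcirc : car -> car -> car;
  binv : car -> car
}.

Section Ops.
Variable A : brace_ops.
Local Notation "a + b" := (badd A a b).
Local Notation "- a" := (bopp A a).
Local Notation e := (bzero A).
Local Notation "a 'o' b" := (bcirc A a b) (at level 40, left associativity).

Definition is_skew_brace : Prop :=
  (forall a b c, a + (b + c) = (a + b) + c) /\
  (forall a, e + a = a) /\ (forall a, a + e = a) /\
  (forall a, - a + a = e) /\ (forall a, a + - a = e) /\
  (forall a b c, a o (b o c) = (a o b) o c) /\
  (forall a, e o a = a) /\ (forall a, a o e = a) /\
  (forall a, binv A a o a = e) /\ (forall a, a o binv A a = e) /\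
  (forall a b c, a o (b + c) = a o b + - a + a o c).

Definition lam (a b : A) : A := - a + a o b.
Definition bstar (a b : A) : A := - a + a o b + - b.

Definition ideal (I : A -> Prop) : Prop :=
  I e /\ (forall x y, I x -> I y -> I (x + y)) /\ (forall x, I x -> I (- x)) /\
  (forall a x, I x -> I (a + x + - a)) /\
  (forall x y, I x -> I y -> I (x o y)) /\ (forall x, I x -> I (binv A x)) /\
  (forall a x, I x -> I (a o x o binv A a)) /\
  (forall a x, I x -> I (lam a x)).

Definition prime_ideal (P : A -> Prop) : Prop :=
  ideal P /\ (exists a, ~ P a) /\
  forall X Y : A -> Prop,
    (forall x y, X x -> Y y -> P (bstar x y)) ->
    (forall x, X x -> P x) \/ (forall y, Y y -> P y).

Definition Spec : Type := { P : A -> Prop | prime_ideal P }.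

Definition H (I : A -> Prop) : Spec -> Prop :=
  fun P => forall x, I x -> proj1_sig P x.

Definition spec_closed (C : Spec -> Prop) : Prop :=
  exists I, ideal I /\ forall P, C P <-> H I P.

Definition Nil : A -> Prop := fun a => forall P, prime_ideal P -> P a.

Definition coset (I : A -> Prop) (a : A) : A -> Prop :=
  fun x => exists i, I i /\ x = a + i.

Definition quot_car (I : A -> Prop) : Type :=
  { S : A -> Prop | exists a, S = coset I a }.

Definition rep (I : A -> Prop) (S : quot_car I) : A :=
  proj1_sig (constructive_indefinite_description _ (proj2_sig S)).

Definition mkq (I : A -> Prop) (a : A) : quot_car I :=
  exist _ (coset I a) (ex_intro _ a eq_refl).

Definition quotient (I : A -> Prop) : brace_ops :=
  @BraceOps (quot_car I)
    (fun S T => mkq I (rep S + rep T))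
    (fun S => mkq I (- rep S))
    (mkq I e)
    (fun S T => mkq I (rep S o rep T))
    (fun S => mkq I (binv A (rep S))).

End Ops.

Definition continuous_cl {X Y : Type} (clX : (X -> Prop) -> Prop)
  (clY : (Y -> Prop) -> Prop) (f : X -> Y) : Prop :=
  forall C, clY C -> clX (fun x => C (f x)).

Definition homeomorphic {X Y : Type} (clX : (X -> Prop) -> Prop)
  (clY : (Y -> Prop) -> Prop) : Prop :=
  exists (f : X -> Y) (g : Y -> X),
    (forall x, g (f x) = x) /\ (forall y, f (g y) = y) /\
    continuous_cl clX clY f /\ continuous_cl clY clX g.

(** A surjective homomorphism of skew braces [f : A -> B] such that no fibre
    of [f] meets a prime ideal of [A] without lying in it induces mutually
    inverse bijections [P |-> f(P)] and [Q |-> f^-1(Q)] between the prime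
    spectra; pulling [H(J)] back along them gives [H(f^-1 J)] and [H(f J)],
    so both are continuous.  The quotient map [A -> A/Nil A] is such a
    homomorphism: its fibres are the cosets of [Nil A], which lies in every
    prime ideal. *)

From Stdlib Require Import FunctionalExtensionality PropExtensionality
  ProofIrrelevance ClassicalEpsilon.

Set Implicit Arguments.

Section Group.
Variables (G : Type) (mul : G -> G -> G) (inv : G -> G) (one : G).

Record group_laws : Prop := GroupLaws {
  mulgA : forall x y z, mul x (mul y z) = mul (mul x y) z;
  mul1g : forall x, mul one x = x;
  mulg1 : forall x, mul x one = x;
  mulVg : forall x, mul (inv x) x = one;
  mulgV : forall x, mul x (inv x) = one
}.

Record normal_subgroup (N : G -> Prop) : Prop := NormalSubgroup {
  group1 : N one;
  groupM : forall x y, N x -> N y -> N (mul x y);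
  groupV : forall x, N x -> N (inv x);
  groupJ : forall a x, N x -> N (mul (mul a x) (inv a))
}.

Definition eqmod (N : G -> Prop) (x y : G) : Prop := N (mul (inv x) y).

Hypothesis hG : group_laws.

Lemma mulKg x y : mul (inv x) (mul x y) = y.
Proof. now rewrite (mulgA hG), (mulVg hG), (mul1g hG). Qed.

Lemma mulKVg x y : mul x (mul (inv x) y) = y.
Proof. now rewrite (mulgA hG), (mulgV hG), (mul1g hG). Qed.

Lemma invg_unique x y : mul x y = one -> y = inv x.
Proof. intros E. now rewrite <- (mulKg x y), E, (mulg1 hG). Qed.

Lemma invgK x : inv (inv x) = x.
Proof. symmetry. apply invg_unique, (mulVg hG). Qed.

Lemma invg1 : inv one = one.
Proof. symmetry. apply invg_unique, (mulg1 hG). Qed.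

Lemma invgM x y : inv (mul x y) = mul (inv y) (inv x).
Proof.
  symmetry. apply invg_unique.
  now rewrite <- (mulgA hG), (mulKVg y), (mulgV hG).
Qed.

End Group.

Tactic Notation "group_simpl" constr(G) :=
  repeat first
    [ rewrite (invgM G) | rewrite (invgK G) | rewrite (invg1 G)
    | rewrite <- (mulgA G) | rewrite (mulKg G) | rewrite (mulKVg G)
    | rewrite (mul1g G) | rewrite (mulg1 G) | rewrite (mulgV G)
    | rewrite (mulVg G) ].

Section NormalSubgroup.
Variables (G : Type) (mul : G -> G -> G) (inv : G -> G) (one : G) (N : G -> Prop).
Hypotheses (hG : group_laws mul inv one) (hN : normal_subgroup mul inv one N).

Lemma eqmod_sym x y : eqmod mul inv N x y -> eqmod mul inv N y x.
Proof.
  unfold eqmod. intros h. generalize (groupV hN _ h).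
  now group_simpl hG.
Qed.

Lemma eqmodM a a' b b' :
  eqmod mul inv N a a' -> eqmod mul inv N b b' ->
  eqmod mul inv N (mul a b) (mul a' b').
Proof.
  unfold eqmod. intros ha hb.
  generalize (groupM hN _ _ (groupJ hN (inv b) _ ha) hb).
  now group_simpl hG.
Qed.

Lemma eqmodV a a' : eqmod mul inv N a a' -> eqmod mul inv N (inv a) (inv a').
Proof.
  unfold eqmod. intros ha.
  generalize (groupJ hN a _ (groupV hN _ ha)).
  now group_simpl hG.
Qed.

End NormalSubgroup.

Lemma ideal_intersection (A : brace_ops) (F : (A -> Prop) -> Prop) :
  (forall P, F P -> ideal A P) -> ideal A (fun x => forall P, F P -> P x).
Proof.
  intros hF. repeat split; intros;
    match goal with hP : F ?P |- _ =>
      repeat match goal with h : forall Q, F Q -> Q _ |- _ => specialize (h P hP) end;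
      destruct (hF P hP) as (P0 & PD & PN & PDJ & PC & PI & PCJ & Plam)
    end; auto.
Qed.

Lemma spec_eq (C : brace_ops) (P Q : Spec C) :
  (forall x, proj1_sig P x <-> proj1_sig Q x) -> P = Q.
Proof.
  intros E. apply eq_sig_hprop; [intros; apply proof_irrelevance |].
  apply functional_extensionality; intros x. now apply propositional_extensionality.
Qed.

Section BraceHomomorphism.
Variables (A B : brace_ops) (f : A -> B).

Record brace_hom : Prop := BraceHom {
  hom_add : forall a b, f (badd A a b) = badd B (f a) (f b);
  hom_opp : forall a, f (bopp A a) = bopp B (f a);
  hom_zero : f (bzero A) = bzero B;
  hom_circ : forall a b, f (bcirc A a b) = bcirc B (f a) (f b);
  hom_inv : forall a, f (binv A a) = binv B (f a)
}.

Definition image (P : A -> Prop) : B -> Prop := fun b => exists a, P a /\ f a = b.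

Definition saturated (P : A -> Prop) : Prop :=
  forall a b, f a = f b -> P a -> P b.

Hypothesis f_hom : brace_hom.
Hypothesis f_surj : forall b, exists a, f a = b.

Lemma hom_lam a b : f (lam A a b) = lam B (f a) (f b).
Proof. unfold lam. now rewrite (hom_add f_hom), (hom_opp f_hom), (hom_circ f_hom). Qed.

Lemma hom_bstar a b : f (bstar A a b) = bstar B (f a) (f b).
Proof.
  unfold bstar.
  now rewrite !(hom_add f_hom), !(hom_opp f_hom), (hom_circ f_hom).
Qed.

Lemma ideal_preimage J : ideal B J -> ideal A (fun a => J (f a)).
Proof.
  intros (J0 & JD & JN & JDJ & JC & JI & JCJ & Jlam).
  repeat split; intros;
    rewrite ?(hom_add f_hom), ?(hom_opp f_hom), ?(hom_zero f_hom),
      ?(hom_circ f_hom), ?(hom_inv f_hom), ?hom_lam; auto.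
Qed.

Lemma ideal_image J : ideal A J -> ideal B (image J).
Proof.
  intros (J0 & JD & JN & JDJ & JC & JI & JCJ & Jlam).
  repeat split.
  - exists (bzero A). split; [exact J0 | apply (hom_zero f_hom)].
  - intros _ _ [x [hx <-]] [y [hy <-]].
    exists (badd A x y). split; [auto | apply (hom_add f_hom)].
  - intros _ [x [hx <-]]. exists (bopp A x). split; [auto | apply (hom_opp f_hom)].
  - intros b _ [x [hx <-]]. destruct (f_surj b) as [a <-].
    exists (badd A (badd A a x) (bopp A a)). split; [auto |].
    now rewrite !(hom_add f_hom), (hom_opp f_hom).
  - intros _ _ [x [hx <-]] [y [hy <-]].
    exists (bcirc A x y). split; [auto | apply (hom_circ f_hom)].
  - intros _ [x [hx <-]]. exists (binv A x). split; [auto | apply (hom_inv f_hom)].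
  - intros b _ [x [hx <-]]. destruct (f_surj b) as [a <-].
    exists (bcirc A (bcirc A a x) (binv A a)). split; [auto |].
    now rewrite !(hom_circ f_hom), (hom_inv f_hom).
  - intros b _ [x [hx <-]]. destruct (f_surj b) as [a <-].
    exists (lam A a x). split; [auto | apply hom_lam].
Qed.

Lemma image_preimage (Q : B -> Prop) b : image (fun a => Q (f a)) b <-> Q b.
Proof.
  split.
  - now intros [a [ha <-]].
  - intros hb. destruct (f_surj b) as [a <-]. now exists a.
Qed.

Lemma preimage_image P : saturated P -> forall a, image P (f a) <-> P a.
Proof.
  intros sat a. split.
  - intros [x [hx ex]]. exact (sat x a ex hx).
  - intros ha. now exists a.
Qed.

Lemma prime_preimage Q : prime_ideal B Q -> prime_ideal A (fun a => Q (f a)).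
Proof.
  intros [HQ [[b nb] pr]]. split; [now apply ideal_preimage |]. split.
  - destruct (f_surj b) as [a <-]. now exists a.
  - intros X Y hXY.
    destruct (pr (image X) (image Y)) as [h | h].
    + intros _ _ [x [hx <-]] [y [hy <-]]. rewrite <- hom_bstar. auto.
    + left. intros x hx. apply h. now exists x.
    + right. intros y hy. apply h. now exists y.
Qed.

Lemma prime_image P : prime_ideal A P -> saturated P -> prime_ideal B (image P).
Proof.
  intros [HP [[a na] pr]] sat. split; [now apply ideal_image |]. split.
  - exists (f a). now rewrite preimage_image.
  - intros X Y hXY.
    destruct (pr (fun a => X (f a)) (fun a => Y (f a))) as [h | h].
    + intros x y hx hy. apply (preimage_image sat). rewrite hom_bstar. auto.
    + left. intros b hb. destruct (f_surj b) as [x <-]. now exists x; auto.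
    + right. intros b hb. destruct (f_surj b) as [y <-]. now exists y; auto.
Qed.

Hypothesis f_sat : forall P, prime_ideal A P -> saturated P.

Definition spec_image (P : Spec A) : Spec B :=
  exist _ (image (proj1_sig P)) (prime_image (proj2_sig P) (f_sat (proj2_sig P))).

Definition spec_preimage (Q : Spec B) : Spec A :=
  exist _ (fun a => proj1_sig Q (f a)) (prime_preimage (proj2_sig Q)).

Lemma spec_image_continuous : continuous_cl (@spec_closed A) (@spec_closed B) spec_image.
Proof.
  intros C [J [HJ HC]]. exists (fun a => J (f a)). split; [now apply ideal_preimage |].
  intros P. rewrite HC. unfold H; simpl. split.
  - intros h a ha. apply (preimage_image (f_sat (proj2_sig P))). auto.
  - intros h b hb. destruct (f_surj b) as [a <-].
    apply (preimage_image (f_sat (proj2_sig P))). auto.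
Qed.

Lemma spec_preimage_continuous :
  continuous_cl (@spec_closed B) (@spec_closed A) spec_preimage.
Proof.
  intros C [J [HJ HC]]. exists (image J). split; [now apply ideal_image |].
  intros Q. rewrite HC. unfold H; simpl. split.
  - intros h _ [a [ha <-]]. auto.
  - intros h a ha. apply h. now exists a.
Qed.

Theorem spec_homeomorphic_of_hom : homeomorphic (@spec_closed A) (@spec_closed B).
Proof.
  exists spec_image, spec_preimage.
  split; [| split; [| split]].
  - intros P. apply spec_eq. apply (preimage_image (f_sat (proj2_sig P))).
  - intros Q. apply spec_eq. apply image_preimage.
  - exact spec_image_continuous.
  - exact spec_preimage_continuous.
Qed.

End BraceHomomorphism.

Section SkewBrace.
Variable A : brace_ops.
Hypothesis hA : is_skew_brace A.
Local Notation "a + b" := (badd A a b).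
Local Notation "- a" := (bopp A a).
Local Notation e := (bzero A).
Local Notation "a 'o' b" := (bcirc A a b) (at level 40, left associativity).

Lemma add_group : group_laws (badd A) (bopp A) e.
Proof. destruct hA as (? & ? & ? & ? & ? & _). now constructor. Qed.

Lemma circ_group : group_laws (bcirc A) (binv A) e.
Proof. destruct hA as (_ & _ & _ & _ & _ & ? & ? & ? & ? & ? & _). now constructor. Qed.

Lemma circ_addr a b c : a o (b + c) = a o b + - a + a o c.
Proof. apply hA. Qed.

Lemma circ_oppr a b : a o (- b) = a + - (a o b) + a.
Proof.
  assert (E : a o b + - a + a o (- b) = a).
  { now rewrite <- circ_addr, (mulgV add_group), (mulg1 circ_group). }
  rewrite <- E at 4. now group_simpl add_group.
Qed.

Lemma lamM a b x : lam A (a o b) x = lam A a (lam A b x).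
Proof.
  unfold lam. rewrite circ_addr, circ_oppr, (mulgA circ_group).
  now group_simpl add_group.
Qed.

Lemma lamK a x : lam A (binv A a) (lam A a x) = x.
Proof.
  rewrite <- lamM, (mulVg circ_group). unfold lam.
  rewrite (mul1g circ_group). now group_simpl add_group.
Qed.

Section Quotient.
Variable I : A -> Prop.
Hypothesis HI : ideal A I.

Local Notation addmod := (eqmod (badd A) (bopp A) I).
Local Notation circmod := (eqmod (bcirc A) (binv A) I).

Lemma ideal_add_normal : normal_subgroup (badd A) (bopp A) e I.
Proof. destruct HI as (? & ? & ? & ? & _). now constructor. Qed.

Lemma ideal_circ_normal : normal_subgroup (bcirc A) (binv A) e I.
Proof. destruct HI as (? & _ & _ & _ & ? & ? & ? & _). now constructor. Qed.

(* [-x + y = lam x (x^-1 o y)], and both [lam x] and its inverse [lam x^-1]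
   preserve [I]. *)
Lemma addmod_circmod x y : addmod x y <-> circmod x y.
Proof.
  assert (E : - x + y = lam A x (binv A x o y)).
  { unfold lam. now rewrite (mulKVg circ_group). }
  destruct HI as (_ & _ & _ & _ & _ & _ & _ & Ilam).
  unfold eqmod. rewrite E. split.
  - intros h. rewrite <- (lamK x). auto.
  - auto.
Qed.

Lemma coset_eq a b : addmod a b -> coset A I a = coset A I b.
Proof.
  intros hab. apply functional_extensionality; intros x.
  apply propositional_extensionality; unfold coset; split.
  - intros [i [hi ->]]. exists (- b + a + i). split.
    + apply (groupM ideal_add_normal); [| exact hi].
      now apply (eqmod_sym add_group ideal_add_normal).
    + now group_simpl add_group.
  - intros [i [hi ->]]. exists (- a + b + i). split.
    + now apply (groupM ideal_add_normal).
    + now group_simpl add_group.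
Qed.

Lemma mkq_eqmod a b : mkq A I a = mkq A I b <-> addmod a b.
Proof.
  split.
  - intros E. apply (f_equal (@proj1_sig _ _)) in E. simpl in E.
    assert (hb : coset A I b b).
    { exists e. split; [apply (group1 ideal_add_normal) | now rewrite (mulg1 add_group)]. }
    rewrite <- E in hb. destruct hb as [i [hi ->]].
    unfold eqmod. now rewrite (mulKg add_group).
  - intros hab. apply eq_sig_hprop; [intros; apply proof_irrelevance |].
    now apply coset_eq.
Qed.

Lemma mkq_rep (S : quot_car A I) : mkq A I (rep S) = S.
Proof.
  apply eq_sig_hprop; [intros; apply proof_irrelevance |]. simpl.
  unfold rep. destruct (constructive_indefinite_description _ _) as [a Ha].
  now rewrite Ha.
Qed.

Lemma mkq_surj (S : quotient A I) : exists a, mkq A I a = S.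
Proof. exists (rep S). apply mkq_rep. Qed.

Lemma eqmod_rep_mkq a : addmod a (rep (mkq A I a)).
Proof. apply mkq_eqmod. symmetry. apply mkq_rep. Qed.

Lemma mkq_hom : @brace_hom A (quotient A I) (mkq A I).
Proof.
  pose proof ideal_add_normal as hN. pose proof ideal_circ_normal as hM.
  constructor; intros; simpl; try reflexivity; apply mkq_eqmod.
  - apply (eqmodM add_group hN); apply eqmod_rep_mkq.
  - apply (eqmodV add_group hN), eqmod_rep_mkq.
  - apply addmod_circmod, (eqmodM circ_group hM); apply addmod_circmod, eqmod_rep_mkq.
  - apply addmod_circmod, (eqmodV circ_group hM), addmod_circmod, eqmod_rep_mkq.
Qed.

Lemma mkq_saturated P :
  ideal A P -> (forall x, I x -> P x) -> @saturated A (quotient A I) (mkq A I) P.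
Proof.
  intros HP sub a b E pa. apply mkq_eqmod in E.
  rewrite <- (mulKVg add_group a b). destruct HP as (_ & PD & _). auto.
Qed.

Theorem spec_quotient_homeomorphic :
  (forall P, prime_ideal A P -> forall x, I x -> P x) ->
  homeomorphic (@spec_closed A) (@spec_closed (quotient A I)).
Proof.
  intros sub. apply (spec_homeomorphic_of_hom mkq_hom mkq_surj).
  intros P HP. apply mkq_saturated; [apply HP | now apply sub].
Qed.

End Quotient.

End SkewBrace.

Theorem corollary4p17 (A : brace_ops) (hA : is_skew_brace A) :
  homeomorphic (@spec_closed A) (@spec_closed (@quotient A (Nil A))).
Proof.
  apply (spec_quotient_homeomorphic hA).
  - apply ideal_intersection. now intros P [HP _].
  - intros P HP x hx. exact (hx P HP).
Qed.
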